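(* Under the Standing Setup and Assumption (G) described in the context, let $g$ be any Boolean function of $k$ variables of the form $$g(x_1,\ldots,x_k)=\bigoplus_{i=1}^s g_i(x_{\ell_i+1},\ldots,x_{\ell_{i+1}}),$$ where each $g_i$ is an arbitrary Boolean function of $\ell_{i+1}-\ell_i$ variables, and regard $g$ as a function on $\mathbf{F}_2^n$ depending only on the first $k$ coordinates. Then $$\mathcal{E}(PC_{f,\mathcal{T}})\ \ge\ \big[\mathcal{E}(f\oplus g)\big]^{2^s}.$$
   Context: Standing Setup. $f:\mathbf{F}_2^n\to\mathbf{F}_2$ is a Boolean function. $\mathbf{x}_1,\ldots,\mathbf{x}_n$ are binary sequences, $\mathbf{x}_j=(x_j(t))_{t\ge0}$, with $\mathbf{x}_j$ periodic of period $T_j$, i.e. $x_j(t)=x_j(t \bmod T_j)$. Let $s\ge1$ and integers $0=\ell_1<\ell_2<\cdots<\ell_{s+1}=k\le n$; variable $j$ belongs to block $i$ if $\ell_i<j\le\ell_{i+1}$. For $1\le i\le s$, $M_i=q_i\,\mathrm{lcm}(T_{\ell_i+1},\ldots,T_{\ell_{i+1}})$ with $q_i$ a positive integer. For $c=\sum_{i=1}^s c_i2^{i-1}\in\{0,\ldots,2^s-1\}$ with $c_i\in\{0,1\}$, put $\tau_c=\sum_{i=1}^s c_iM_i$, and $\mathcal{T}=\{\tau_c\}$. The parity-check sequence is $PC_{f,\mathcal{T}}(t)=\bigoplus_{c=0}^{2^s-1} f\big(x_1(t+\tau_c),\ldots,x_n(t+\tau_c)\big)$. The bias of a Boolean function $h$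 of $m$ variables is $\mathcal{E}(h)=2^{-m}\sum_{x\in\mathbf{F}_2^m}(-1)^{h(x)}$. The bias $\mathcal{E}(PC_{f,\mathcal{T}})$ is the bias of $PC_{f,\mathcal{T}}(t)$ (for a fixed $t\ge0$) viewed as a Boolean function of the $T_1+\cdots+T_n$ bits $x_j(0),\ldots,x_j(T_j-1)$, $1\le j\le n$; equivalently $\mathcal{E}(PC_{f,\mathcal{T}})=\mathbb{E}[(-1)^{PC_{f,\mathcal{T}}(t)}]$ when these bits are independent and uniformly distributed. Assumption (G): (i) for every $j$ with $k<j\le n$, the $2^s$ integers $\tau_c$ are pairwise incongruent modulo $T_j$ (in particular no nonzero element of $\mathcal{T}$ is a multiple of $T_j$); (ii) for every $i\in\{1,\ldots,s\}$ and every $j$ in block $i$, the $2^{s-1}$ integers $\sum_{l\ne i}c_lM_l$ ($c_l\in\{0,1\}$) are pairwise incongruent modulo $T_j$. *)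

From HB Require Import structures.
From mathcomp Require Import all_boot all_order all_algebra.
Set Implicit Arguments. Unset Strict Implicit. Unset Printing Implicit Defensive.
Import Order.TTheory GRing.Theory Num.Theory.

Definition bias (D : finType) (h : D -> bool) : rat :=
  ((\sum_(x : D) (-1) ^+ h x) / (#|D|%:R))%R.

(* The free bits x_j(0), ..., x_j(T j - 1) for 0 <= j < n (0-based). *)
Definition bits (n : nat) (T : nat -> nat) : finType :=
  {ffun {j : 'I_n & 'I_(T j)} -> bool}.

Definition xseq (n : nat) (T : nat -> nat) (X : bits n T) (j : 'I_n) (t : nat)
  : bool :=
  oapp (fun i : 'I_(T j) => X (Tagged (fun j : 'I_n => 'I_(T j)) i)) false
       (insub (t %% T j)).

(* Coordinate j (a nat) of a point of F_2^n, false if out of range. *)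
Definition coord (n : nat) (x : {ffun 'I_n -> bool}) (j : nat) : bool :=
  oapp x false (insub j).

(* M_i = q_i * lcm(T_j : j in block i), block i = {j | l i <= j < l (i+1)}
   (0-based blocks and variables). *)
Definition Mblk (T l q : nat -> nat) (i : nat) : nat :=
  q i * \big[lcmn/1]_(l i <= j < l i.+1) T j.

Definition tau (s : nat) (T l q : nat -> nat) (c : {set 'I_s}) : nat :=
  \sum_(i < s | i \in c) Mblk T l q i.

Definition PC (n s : nat) (T l q : nat -> nat)
  (f : {ffun 'I_n -> bool} -> bool) (t : nat) (X : bits n T) : bool :=
  \big[addb/false]_(c : {set 'I_s})
     f [ffun j => xseq X j (t + tau T l q c)].

Definition gsum (n s : nat) (l : nat -> nat)
  (gi : forall i : 'I_s, {ffun 'I_(l i.+1 - l i) -> bool} -> bool)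
  (x : {ffun 'I_n -> bool}) : bool :=
  \big[addb/false]_(i < s) gi i [ffun m : 'I_(l i.+1 - l i) => coord x (l i + m)].

From Pilot Require Import Defs.
From HB Require Import structures.
From mathcomp Require Import all_boot all_order all_algebra.
Import Order.TTheory GRing.Theory Num.Theory.
Set Implicit Arguments. Unset Strict Implicit. Unset Printing Implicit Defensive.

(* Write phi = (-1)^(f + g) and, for the free bits X, let x_c be the point
   (x_j(t + tau_c))_j read at shift c, so that (-1)^PC(X) would be
   prod_c phi(x_c) if the g-part cancelled.  It does: M_i is a multiple of
   T_j for every j in block i, so x_c restricted to block i ignores c_i and
   the g_i-terms cancel in pairs.  Coordinate j of x_c depends only on the
   reduced pair (j, c \ A_j), A_j the blocks containing j, and Assumption (G)
   says distinct reduced pairs read distinct bits.  Since restricting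
   uniform bits along an injection gives uniform bits, the bias of PC is the
   average over independent uniform bits y of prod_c phi(x_c) with
   x_c(j) = y(j, c \ A_j).  The "box inequality" bounds such an average
   below by (mean phi)^(2^s) for any sets A_j: removing one index m from all
   A_j can only decrease it (Cauchy-Schwarz on slices), and when all A_j are
   empty it factorises as (mean phi)^(2^s). *)

Section Toggle.
Variable s : nat.

Definition tog (m : 'I_s) (c : {set 'I_s}) : {set 'I_s} :=
  if m \in c then c :\ m else m |: c.

Lemma togK m : involutive (tog m).
Proof.
move=> c; rewrite /tog; case mc: (m \in c); rewrite !inE eqxx /=;
  by apply/setP=> x; rewrite !inE; case: eqP => // ->; rewrite mc.
Qed.

Lemma in_tog m (c : {set 'I_s}) : (m \in tog m c) = (m \notin c).
Proof. by rewrite /tog; case: ifP; rewrite !inE eqxx => ->. Qed.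

Lemma tog_notin m (c : {set 'I_s}) : m \notin c -> tog m c = m |: c.
Proof. by rewrite /tog => /negbTE ->. Qed.

Lemma big_pair_toggle (R : Type) (idx : R) (op : Monoid.com_law idx)
    (m : 'I_s) (F : {set 'I_s} -> R) :
  \big[op/idx]_(c : {set 'I_s}) F c =
  op (\big[op/idx]_(c : {set 'I_s} | m \notin c) F c)
     (\big[op/idx]_(c : {set 'I_s} | m \notin c) F (m |: c)).
Proof.
rewrite (bigID (fun c : {set 'I_s} => m \notin c)) /=; congr (op _ _).
rewrite (reindex_inj (inv_inj (togK m))) /=.
apply: eq_big => c; first by rewrite in_tog negbK.
by rewrite in_tog negbK => mc; rewrite tog_notin.
Qed.

Lemma xor_ignoring_index (m : 'I_s) (w : {set 'I_s} -> bool) :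
  (forall c, w c = w (c :\ m)) -> \big[addb/false]_(c : {set 'I_s}) w c = false.
Proof.
move=> wm; rewrite (big_pair_toggle _ m) /=.
rewrite [X in _ (+) X](eq_bigr w) ?addbb // => c mc.
by rewrite wm setU1K.
Qed.

Lemma card_subsets : #|{set 'I_s}| = 2 ^ s.
Proof. by rewrite -cardsT -powersetT card_powerset cardsT card_ord. Qed.

End Toggle.

Section Averages.
Variable R : realFieldType.
Local Open Scope ring_scope.

Definition mean (D : finType) (F : D -> R) : R := (\sum_x F x) / #|D|%:R.

Lemma eq_mean (D : finType) (F G : D -> R) : F =1 G -> mean F = mean G.
Proof. by move=> FG; rewrite /mean (eq_bigr G). Qed.

Lemma sign_xor (I : finType) (b : I -> bool) :
  (-1) ^+ (\big[addb/false]_i b i) = \prod_i (-1) ^+ b i :> R.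
Proof.
have sign_false : (-1) ^+ false = 1 :> R by rewrite expr0.
by rewrite (big_morph (fun x : bool => (-1) ^+ x : R) (@signr_addb _) sign_false).
Qed.

Lemma sum_sqr_le (I : finType) (V : I -> R) :
  (\sum_i V i) ^+ 2 <= #|I|%:R * \sum_i V i ^+ 2.
Proof.
have sum_sq_diff : \sum_i \sum_j (V i - V j) ^+ 2 =
    (#|I|%:R * \sum_i V i ^+ 2 - (\sum_i V i) ^+ 2) *+ 2.
  under eq_bigr => i _ do under eq_bigr => j _ do rewrite sqrrB addrAC.
  under eq_bigr => i _ do rewrite sumrB big_split /=.
  rewrite sumrB big_split /= sumr_const exchange_big /= sumr_const -mulr2n.
  rewrite expr2 big_distrl /= mulrnBl mulr_natl; congr (_ - _).
  by rewrite -sumrMnl; apply: eq_bigr => i _; rewrite sumrMnl big_distrr.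
have : 0 <= \sum_i \sum_j (V i - V j) ^+ 2.
  by apply: sumr_ge0 => i _; apply: sumr_ge0 => j _; apply: sqr_ge0.
by rewrite sum_sq_diff pmulrn_lge0 // subr_ge0.
Qed.

Section Merge.
Variables I Y : finType.

Definition merge (P : pred I) (y z : {ffun I -> Y}) : {ffun I -> Y} :=
  [ffun i => if P i then y i else z i].

(* (y, z) |-> (merge y z, merge z y) is a bijection of pairs. *)
Lemma sum_merge P (H : {ffun I -> Y} -> R) :
  \sum_y \sum_z H (merge P y z) = #|{ffun I -> Y}|%:R * \sum_y H y.
Proof.
rewrite pair_bigA /=.
pose g (p : {ffun I -> Y} * {ffun I -> Y}) := (merge P p.1 p.2, merge P p.2 p.1).
have gK : involutive g.
  by case=> y z; congr (_, _); apply/ffunP=> i; rewrite !ffunE; case: (P i).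
rewrite (reindex_inj (inv_inj gK)) /=.
have -> : \sum_p H (merge P (g p).1 (g p).2) =
          \sum_(p : {ffun I -> Y} * {ffun I -> Y}) H p.1.
  apply: eq_bigr => -[y z] _; congr H; apply/ffunP=> i; rewrite /g /= !ffunE.
  by case: (P i).
rewrite -(pair_bigA _ (fun y z => H y)) /= mulr_natl -sumrMnl.
by apply: eq_bigr => y _; rewrite sumr_const card_ffun.
Qed.

Lemma sum_merge_indep P (F G : {ffun I -> Y} -> R) :
  (forall y z, F (merge P y z) = F y) -> (forall y z, G (merge P y z) = G z) ->
  (\sum_y F y) * (\sum_z G z) = #|{ffun I -> Y}|%:R * \sum_y F y * G y.
Proof.
move=> HF HG; rewrite -(sum_merge P) big_distrl /=; apply: eq_bigr => y _.
by rewrite big_distrr /=; apply: eq_bigr => z _; rewrite HF HG.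
Qed.

Section Restrict.
Variables (J : finType) (e : J -> I).
Hypothesis e_inj : injective e.

Definition restr (X : {ffun I -> Y}) : {ffun J -> Y} := [ffun j => X (e j)].
Definition extend (X : {ffun I -> Y}) (Z : {ffun J -> Y}) : {ffun I -> Y} :=
  [ffun i => if [pick j | e j == i] is Some j then Z j else X i].

Lemma restr_extend X Z : restr (extend X Z) = Z.
Proof.
apply/ffunP=> j; rewrite !ffunE; case: pickP => [j' /eqP/e_inj -> //|].
by move/(_ j); rewrite eqxx.
Qed.

Lemma extend_restr X Z : extend (extend X Z) (restr X) = X.
Proof.
by apply/ffunP=> i; rewrite !ffunE; case: pickP => [j' /eqP <-|_]; rewrite ?ffunE.
Qed.

(* Every Z has the same number of preimages under restr. *)
Lemma sum_restr (H : {ffun J -> Y} -> R) :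
  #|{ffun I -> Y}|%:R * \sum_Z H Z = #|{ffun J -> Y}|%:R * \sum_X H (restr X).
Proof.
have -> : #|{ffun I -> Y}|%:R * \sum_Z H Z = \sum_X \sum_Z H (restr (extend X Z)).
  under [RHS]eq_bigr => X _ do under eq_bigr => Z _ do rewrite restr_extend.
  by rewrite sumr_const mulr_natl.
rewrite pair_bigA /=.
pose g (p : {ffun I -> Y} * {ffun J -> Y}) := (extend p.1 p.2, restr p.1).
have gK : involutive g by case=> X Z; rewrite /g /= extend_restr restr_extend.
rewrite (reindex_inj (inv_inj gK)) /=.
under eq_bigr => p _ do rewrite /g /= extend_restr.
rewrite -(pair_bigA _ (fun X Z => H (restr X))) /= mulr_natl -sumrMnl.
by apply: eq_bigr => X _; rewrite sumr_const.
Qed.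

Lemma mean_restr (H : {ffun J -> Y} -> R) : (0 < #|Y|)%N ->
  mean (fun X : {ffun I -> Y} => H (restr X)) = mean H.
Proof.
move=> Y0; have cpos (D : finType) : #|{ffun D -> Y}|%:R != 0 :> R.
  by rewrite pnatr_eq0 card_ffun -lt0n expn_gt0 Y0.
by apply/eqP; rewrite /mean eqr_div // mulrC -sum_restr mulrC.
Qed.

End Restrict.
End Merge.
End Averages.

Lemma bias_mean (D : finType) (h : D -> bool) :
  bias h = mean (fun x => (-1) ^+ h x : rat)%R.
Proof. by []. Qed.

(* Points y assign a bit to every pair (k, c) of a
   variable k and a subset c of 'I_s; the point read at "time" c is
   xc A y c = (y (k, c \ A k))_k, so variable k ignores the indices in A k. *)
Section Box.
Variables (R : realFieldType) (K : finType) (s : nat).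
Variable phi : {ffun K -> bool} -> R.
Local Open Scope ring_scope.
Local Notation Pt := {ffun K * {set 'I_s} -> bool}.

Definition xc (A : K -> {set 'I_s}) (y : Pt) (c : {set 'I_s}) : {ffun K -> bool} :=
  [ffun k => y (k, c :\: A k)].

Definition Phi (A : K -> {set 'I_s}) : R := \sum_(y : Pt) \prod_c phi (xc A y c).

Lemma Phi_ext A B : A =1 B -> Phi A = Phi B.
Proof.
move=> AB; apply: eq_bigr => y _; apply: eq_bigr => c _; congr phi.
by apply/ffunP=> k; rewrite !ffunE AB.
Qed.

(* With nothing ignored the 2^s points are independent. *)
Lemma Phi_set0 : Phi (fun _ => set0) = (\sum_x phi x) ^+ (2 ^ s).
Proof.
pose unc (F : {ffun {set 'I_s} -> {ffun K -> bool}}) : Pt := [ffun p => F p.2 p.1].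
pose cur (y : Pt) : {ffun {set 'I_s} -> {ffun K -> bool}} :=
  [ffun c => [ffun k => y (k, c)]].
have cK : cancel cur unc by move=> y; apply/ffunP=> -[k c]; rewrite !ffunE.
rewrite /Phi (reindex unc); last by exists cur => [F _|y _] //;
  apply/ffunP=> c; apply/ffunP=> k; rewrite !ffunE.
rewrite -card_subsets -prodr_const bigA_distr_bigA /=.
apply: eq_bigr => F _; apply: eq_bigr => c _; congr phi.
by apply/ffunP=> k; rewrite !ffunE setD0.
Qed.

Definition swap m (y : Pt) : Pt := [ffun p => y (p.1, tog m p.2)].

Lemma sum_swap m (H : Pt -> R) : \sum_y H (swap m y) = \sum_y H y.
Proof.
have sK : involutive (swap m).
  by move=> y; apply/ffunP=> -[k c]; rewrite !ffunE /= togK.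
by rewrite [RHS](reindex_inj (inv_inj sK)).
Qed.

Section Drop.
Variables (A : K -> {set 'I_s}) (m : 'I_s).
Local Notation N := (#|Pt|%:R : R).

Definition low : pred (K * {set 'I_s}) := fun p => m \notin p.2.
Definition ignoring : pred (K * {set 'I_s}) := fun p => m \in A p.1.

Definition U (y : Pt) : R := \prod_(c : {set 'I_s} | m \notin c) phi (xc A y c).

(* The factors at times m |: c read y at c, or swap m y if k does not ignore m. *)
Lemma Phi_split :
  Phi A = \sum_y U y * U (merge ignoring y (swap m y)).
Proof.
apply: eq_bigr => y _; rewrite (big_pair_toggle _ m); congr (_ * _).
apply: eq_bigr => c mc; congr phi; apply/ffunP=> k; rewrite !ffunE /ignoring /=.
case: ifP => mA; last rewrite tog_notin ?inE ?(negbTE mc) ?andbF //.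
all: congr (y (k, _)); apply/setP => x; rewrite !inE.
all: by case: (x =P m) => [->|]; rewrite ?mA.
Qed.

Lemma Phi_drop_split :
  Phi (fun k => A k :\ m) = \sum_y U y * U (swap m y).
Proof.
apply: eq_bigr => y _; rewrite (big_pair_toggle _ m); congr (_ * _).
  apply: eq_bigr => c mc; congr phi; apply/ffunP=> k; rewrite !ffunE.
  congr (y (k, _)); apply/setP => x; rewrite !inE.
  by case: (x =P m) => [->|]; rewrite ?(negbTE mc) ?andbF.
apply: eq_bigr => c mc; congr phi; apply/ffunP=> k; rewrite !ffunE /=.
rewrite tog_notin ?inE ?(negbTE mc) ?andbF //; congr (y (k, _)).
by apply/setP => x; rewrite !inE; case: (x =P m).
Qed.

Lemma U_merge_low y z : U (merge low y z) = U y.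
Proof.
apply: eq_bigr => c mc; congr phi; apply/ffunP=> k.
by rewrite !ffunE /low /= inE (negbTE mc) andbF.
Qed.

Lemma U_swap_merge_low y z : U (swap m (merge low y z)) = U (swap m z).
Proof.
apply: eq_bigr => c mc; congr phi; apply/ffunP=> k.
by rewrite !ffunE /low /= in_tog inE (negbTE mc) andbF.
Qed.

(* After dropping m the two halves are independent: Phi is a square. *)
Lemma Phi_drop_sq : N * Phi (fun k => A k :\ m) = (\sum_y U y) ^+ 2.
Proof.
rewrite Phi_drop_split -(sum_merge_indep (P := low)) ?sum_swap ?expr2 //.
  exact: U_merge_low.
exact: U_swap_merge_low.
Qed.

Definition slice (y : Pt) : R := \sum_z U (merge ignoring y z).

Lemma sum_slice : \sum_y slice y = N * \sum_y U y.
Proof. exact: sum_merge. Qed.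

Lemma sum_slice_sq : \sum_y slice y ^+ 2 = N * (N * Phi A).
Proof.
rewrite Phi_split -(sum_merge ignoring) big_distrr /=; apply: eq_bigr => y _.
rewrite expr2 /slice -[X in _ * X](sum_swap m).
have low_only z z' :
    U (merge ignoring y (merge low z z')) = U (merge ignoring y z).
  apply: eq_bigr => c mc; congr phi; apply/ffunP=> k.
  by rewrite !ffunE /ignoring /low /=; case: ifP; rewrite ?inE ?(negbTE mc) ?andbF.
have high_only z z' :
    U (merge ignoring y (swap m (merge low z z'))) = U (merge ignoring y (swap m z')).
  apply: eq_bigr => c mc; congr phi; apply/ffunP=> k.
  rewrite !ffunE /ignoring /low /=; case: ifP => // _.
  by rewrite in_tog inE (negbTE mc) andbF.
rewrite (sum_merge_indep low_only high_only); congr (_ * _).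
apply: eq_bigr => z _; congr (_ * U _).
by apply/ffunP=> -[k c]; rewrite !ffunE /ignoring /=; case: ifP.
Qed.

Lemma Phi_drop_le : Phi (fun k => A k :\ m) <= Phi A.
Proof.
have Npos : 0 < N by rewrite ltr0n card_ffun expn_gt0 card_bool.
have := sum_sqr_le slice; rewrite sum_slice sum_slice_sq exprMn -Phi_drop_sq.
by rewrite expr2 -!mulrA !ler_pM2l.
Qed.

End Drop.

(* Dropping the indices one at a time reaches the independent case. *)
Lemma Phi_lower_bound A : (\sum_x phi x) ^+ (2 ^ s) <= Phi A.
Proof.
have drop_all (r : seq 'I_s) B : Phi (fun k => B k :\: [set x in r]) <= Phi B.
  elim: r B => [|m r IH] B.
    by rewrite (@Phi_ext _ B) // => k; apply/setP=> x; rewrite !inE in_nil.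
  apply: le_trans (IH B).
  rewrite (@Phi_ext _ (fun k => (B k :\: [set x in r]) :\ m)) ?Phi_drop_le //.
  by move=> k; apply/setP=> x; rewrite !inE; case: eqP; rewrite ?andbT.
rewrite -Phi_set0 (@Phi_ext _ (fun k => A k :\: [set x in enum 'I_s])) //.
by move=> k; apply/setP=> x; rewrite !inE mem_enum.
Qed.

Lemma box_bound A :
  mean phi ^+ (2 ^ s) <= mean (fun y : Pt => \prod_c phi (xc A y c)).
Proof.
rewrite /mean expr_div_n -natrX !card_ffun card_prod card_subsets card_bool -expnM.
by rewrite ler_pM2r ?invr_gt0 ?ltr0n ?expn_gt0 // Phi_lower_bound.
Qed.

End Box.

Section Shifts.
Variables (n s : nat) (T l q : nat -> nat) (t : nat).

Definition blocks_of (j : nat) : {set 'I_s} :=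
  [set i : 'I_s | l i <= j < l i.+1].

Lemma period_dvd_Mblk (i : 'I_s) (j : nat) :
  i \in blocks_of j -> T j %| Mblk T l q i.
Proof.
rewrite inE => ji; apply: dvdn_mull.
rewrite (bigD1_seq j) ?mem_index_iota ?iota_uniq //=; exact: dvdn_lcml.
Qed.

Lemma tau_mod_blocks (j : nat) (c : {set 'I_s}) :
  tau T l q c = tau T l q (c :\: blocks_of j) %[mod T j].
Proof.
rewrite /tau (bigID (fun i => i \in blocks_of j)) /=.
have /dvdnP [p ->] :
    T j %| \sum_(i < s | (i \in c) && (i \in blocks_of j)) Mblk T l q i.
  by apply: dvdn_sum => i /andP [_]; apply: period_dvd_Mblk.
rewrite modnMDl; congr (_ %% _); apply: eq_bigl => i.
by rewrite !inE andbC.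
Qed.

Definition shift_point (X : bits n T) (c : {set 'I_s}) : {ffun 'I_n -> bool} :=
  [ffun j => xseq X j (t + tau T l q c)].

Lemma shift_point_blocks X c (j : 'I_n) :
  shift_point X c j = shift_point X (c :\: blocks_of j) j.
Proof. by rewrite !ffunE /xseq -modnDmr tau_mod_blocks modnDmr. Qed.

(* Each g_i ignores c_i, so the g-part of the parity check cancels. *)
Lemma xor_gsum_shifts
    (gi : forall i : 'I_s, {ffun 'I_(l i.+1 - l i) -> bool} -> bool) X :
  \big[addb/false]_(c : {set 'I_s}) gsum gi (shift_point X c) = false.
Proof.
rewrite /gsum exchange_big big1 // => i _.
apply: (xor_ignoring_index (m := i)) => c.
congr (gi i); apply/ffunP => m; rewrite !ffunE /Defs.coord.
case: insubP => // j _ jv /=.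
rewrite shift_point_blocks [RHS]shift_point_blocks; congr (shift_point X _ j).
have ij : i \in blocks_of j by rewrite inE jv leq_addr -ltn_subRL ltn_ord.
by apply/setP => x; rewrite !in_setD in_set1; case: (x =P i) => // ->; rewrite ij.
Qed.

Lemma PC_shift_points f
    (gi : forall i : 'I_s, {ffun 'I_(l i.+1 - l i) -> bool} -> bool) X :
  @PC n s T l q f t X =
  \big[addb/false]_c (f (shift_point X c) (+) gsum gi (shift_point X c)).
Proof. by rewrite big_split /= xor_gsum_shifts addbF. Qed.

End Shifts.

Lemma block_exists (l : nat -> nat) (j s : nat) : l 0 = 0 -> j < l s ->
  exists2 i, i < s & l i <= j < l i.+1.
Proof.
move=> l0; elim: s => [|s IH]; first by rewrite l0.
case: (ltnP j (l s)) => [/IH [i si ji] _|lj js]; first by exists i => //; apply: ltnW.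
by exists s; rewrite ?lj.
Qed.

(* Reduced pairs (j, c), with c disjoint from the blocks of j, index the
   distinct coordinates read by the parity check. *)
Section Reduced.
Variables (n s : nat) (T l q : nat -> nat) (t : nat).
Hypothesis hT : forall j : 'I_n, 0 < T j.

Definition reduced (p : 'I_n * {set 'I_s}) : bool :=
  p.2 :&: blocks_of s l p.1 == set0.
Definition Reduced := {p : 'I_n * {set 'I_s} | reduced p}.

Lemma reduced_setD (j : 'I_n) c : reduced (j, c :\: blocks_of s l j).
Proof.
apply/eqP/setP => x; rewrite in_setI in_setD in_set0 /=.
by case: (x \in blocks_of s l j); rewrite ?andbF.
Qed.

Definition reduce (j : 'I_n) (c : {set 'I_s}) : Reduced :=
  exist _ (j, c :\: blocks_of s l j) (reduced_setD j c).

(* The free bit x_j((t + tau_c) mod T_j) read at the reduced pair (j, c). *)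
Definition bit_of (u : Reduced) : {j : 'I_n & 'I_(T j)} :=
  Tagged (fun j : 'I_n => 'I_(T j))
    (Ordinal (ltn_pmod (t + tau T l q (val u).2) (hT (val u).1))).

Definition reduced_prod (R : realFieldType) (phi : {ffun 'I_n -> bool} -> R)
    (Z : {ffun Reduced -> bool}) : R :=
  (\prod_(c : {set 'I_s}) phi [ffun j => Z (reduce j c)])%R.

Lemma prod_shift_points (R : realFieldType) (phi : {ffun 'I_n -> bool} -> R) X :
  (\prod_(c : {set 'I_s}) phi (shift_point l q t X c))%R =
  reduced_prod phi (restr bit_of X).
Proof.
apply: eq_bigr => c _; congr phi; apply/ffunP=> j; rewrite shift_point_blocks !ffunE.
rewrite /xseq (insubT (fun i => i < T j) (ltn_pmod _ (hT j))) /=.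
by congr (X (Tagged _ _)); apply: val_inj.
Qed.

Lemma prod_xc_blocks (R : realFieldType) (phi : {ffun 'I_n -> bool} -> R) y :
  (\prod_(c : {set 'I_s}) phi (xc (fun j : 'I_n => blocks_of s l j) y c))%R =
  reduced_prod phi (restr val y).
Proof. by apply: eq_bigr => c _; congr phi; apply/ffunP=> j; rewrite !ffunE. Qed.

Lemma sign_PC f (gi : forall i : 'I_s, {ffun 'I_(l i.+1 - l i) -> bool} -> bool)
    (X : bits n T) :
  ((-1) ^+ @PC n s T l q f t X)%R =
  reduced_prod (fun x => (-1) ^+ (f x (+) gsum gi x) : rat)%R (restr bit_of X).
Proof. by rewrite (PC_shift_points _ _ _ gi) sign_xor; apply: prod_shift_points. Qed.

(* Assumption (G) says exactly that distinct reduced pairs read distinct bits. *)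
Lemma bit_of_inj (k : nat) (hl0 : l 0 = 0) (hls : l s = k)
  (hG1 : forall j : 'I_n, k <= j -> forall c1 c2 : {set 'I_s},
     tau T l q c1 = tau T l q c2 %[mod T j] -> c1 = c2)
  (hG2 : forall (i : 'I_s) (j : 'I_n), l i <= j < l i.+1 ->
     forall c1 c2 : {set 'I_s}, i \notin c1 -> i \notin c2 ->
     tau T l q c1 = tau T l q c2 %[mod T j] -> c1 = c2) :
  injective bit_of.
Proof.
move=> [[j c1] r1] [[j2 c2] r2] E.
have /= j2j := congr1 (fun w => tag w) E.
have /= tv := congr1 (fun w => nat_of_ord (tagged w)) E.
move: r2 E tv; rewrite -j2j => r2 E tv.
have tau12 : tau T l q c1 = tau T l q c2 %[mod T j].
  by apply/eqP; rewrite -(eqn_modDl t); apply/eqP.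
suff c12 : c1 = c2.
  by move: r2 E; rewrite -c12 => r2 _; congr exist; apply: bool_irrelevance.
case: (leqP k j) => [kj|jk]; first exact: (hG1 j kj c1 c2 tau12).
have [i si ji] : exists2 i, i < s & l i <= j < l i.+1.
  by apply: block_exists; rewrite ?hls.
have avoid c : reduced (j, c) -> Ordinal si \notin c.
  move=> /eqP /setP /(_ (Ordinal si)); rewrite in_setI in_set0 inE ji andbT /=.
  by move=> ->.
exact: hG2 (Ordinal si) j ji c1 c2 (avoid _ r1) (avoid _ r2) tau12.
Qed.

End Reduced.

Theorem theorem1 (n s k : nat) (T l q : nat -> nat)
  (f : {ffun 'I_n -> bool} -> bool)
  (gi : forall i : 'I_s, {ffun 'I_(l i.+1 - l i) -> bool} -> bool)
  (t : nat)
  (hT : forall j : 'I_n, 0 < T j)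
  (hs : 0 < s)
  (hl0 : l 0 = 0)
  (hlinc : forall i, i < s -> l i < l i.+1)
  (hls : l s = k)
  (hkn : k <= n)
  (hq : forall i, i < s -> 0 < q i)
  (hG1 : forall j : 'I_n, k <= j -> forall c1 c2 : {set 'I_s},
     tau T l q c1 = tau T l q c2 %[mod T j] -> c1 = c2)
  (hG2 : forall (i : 'I_s) (j : 'I_n), l i <= j < l i.+1 ->
     forall c1 c2 : {set 'I_s}, i \notin c1 -> i \notin c2 ->
     tau T l q c1 = tau T l q c2 %[mod T j] -> c1 = c2) :
  ((bias (fun x => f x (+) @gsum n s l gi x)) ^+ (2 ^ s)
     <= bias (@PC n s T l q f t))%R.
Proof.
rewrite !bias_mean (eq_mean (sign_PC q t hT f gi)).
rewrite mean_restr ?card_bool //; last exact: bit_of_inj hl0 hls hG1 hG2.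
rewrite -(mean_restr val_inj) ?card_bool // -(eq_mean (prod_xc_blocks l _)).
exact: box_bound.
Qed.
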